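(* Let $n>m\ge 1$. In the checker game on $n+m+1$ positions, each of the configurations $b^{n-m}O(wb)^m$ and $b^{n-m}(wb)^mO$ can be transformed, by a sequence of exactly $(n-m)(m+1)$ legal moves, into one of the configurations $(wb)^mOb^{n-m}$ or $O(wb)^mb^{n-m}$.
   Context: Positions $1,\dots,n+m+1$ in a row; a configuration is a word over $\{b,w,O\}$ with exactly one $O$, where $b$ denotes a black checker, $w$ a white checker and $O$ the vacancy; exponents denote repetition (e.g. $(wb)^m$ is $wb$ repeated $m$ times). A legal move is either a slide (a checker adjacent to the vacancy moves into it) or a jump (a checker at distance two from the vacancy jumps over the checker between them into the vacancy). *)

From Stdlib Require Import List Arith.
Import ListNotations.

Inductive cell : Type := b | w | O.

Definition config := list cell.

Definition is_checker (x : cell) : Prop := x <> O.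

Definition wb_pow (m : nat) : config := concat (repeat [w; b] m).
Definition b_pow (k : nat) : config := repeat b k.

Inductive move : config -> config -> Prop :=
| slide_right : forall s1 s2 x, is_checker x ->
    move (s1 ++ [x; O] ++ s2) (s1 ++ [O; x] ++ s2)
| slide_left : forall s1 s2 x, is_checker x ->
    move (s1 ++ [O; x] ++ s2) (s1 ++ [x; O] ++ s2)
| jump_right : forall s1 s2 x y, is_checker x -> is_checker y ->
    move (s1 ++ [x; y; O] ++ s2) (s1 ++ [O; y; x] ++ s2)
| jump_left : forall s1 s2 x y, is_checker x -> is_checker y ->
    move (s1 ++ [O; y; x] ++ s2) (s1 ++ [x; y; O] ++ s2).

Inductive moves_in : nat -> config -> config -> Prop :=
| moves_refl : forall c, moves_in 0 c c
| moves_step : forall k c c' c'', move c c' -> moves_in k c' c'' ->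
    moves_in (S k) c c''.

(* Each phase moves the leftmost black checker of the left block to the right
   block in m + 1 moves: it slides into the vacancy, and then the vacancy
   travels across the alternating block by m jumps, each of which swaps a
   pair [b; w] into [w; b].  The vacancy ends on the other side of the block,
   so the phases alternate between the two shapes b^j O (wb)^m b^r and
   b^j (wb)^m O b^r; after n - m phases the left block is empty. *)

From Stdlib Require Import List Arith Lia.
Import ListNotations.

Definition bw_pow (m : nat) : config := concat (repeat [b; w] m).

Lemma concat_repeat_S (l : config) (m : nat) :
  concat (repeat l (S m)) = concat (repeat l m) ++ l.
Proof.
  change (repeat l (S m)) with (l :: repeat l m).
  rewrite repeat_cons, concat_app; simpl.
  now rewrite app_nil_r.
Qed.

Lemma b_pow_S (j : nat) : b_pow (S j) = b_pow j ++ [b].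
Proof.
  unfold b_pow; change [b] with (repeat b 1).
  rewrite <- repeat_app; f_equal; lia.
Qed.

Lemma cons_b_wb_pow (m : nat) : b :: wb_pow m = bw_pow m ++ [b].
Proof.
  induction m as [|m IHm]; [reflexivity|].
  unfold wb_pow, bw_pow in *; simpl.
  now rewrite IHm.
Qed.

Lemma is_checker_b : is_checker b. Proof. discriminate. Qed.
Lemma is_checker_w : is_checker w. Proof. discriminate. Qed.

Lemma moves_in_trans (k1 k2 : nat) (c1 c2 c3 : config) :
  moves_in k1 c1 c2 -> moves_in k2 c2 c3 -> moves_in (k1 + k2) c1 c3.
Proof.
  induction 1; intros; simpl; [assumption|].
  econstructor; eauto.
Qed.

Lemma moves_in_1 (c c' : config) : move c c' -> moves_in 1 c c'.
Proof. intros H; econstructor; [exact H | constructor]. Qed.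

Lemma vacancy_jumps_right (m : nat) : forall s1 s2 : config,
  moves_in m (s1 ++ O :: bw_pow m ++ s2) (s1 ++ wb_pow m ++ O :: s2).
Proof.
  induction m as [|m IHm]; intros s1 s2; [constructor|].
  econstructor.
  - exact (jump_left s1 (bw_pow m ++ s2) w b is_checker_w is_checker_b).
  - specialize (IHm (s1 ++ [w; b]) s2).
    now rewrite <- !app_assoc in IHm.
Qed.

Lemma vacancy_jumps_left (m : nat) : forall s1 s2 : config,
  moves_in m (s1 ++ bw_pow m ++ O :: s2) (s1 ++ O :: wb_pow m ++ s2).
Proof.
  induction m as [|m IHm]; intros s1 s2; [constructor|].
  econstructor.
  - unfold bw_pow; rewrite concat_repeat_S, <- app_assoc, app_assoc.
    exact (jump_right (s1 ++ bw_pow m) s2 b w is_checker_b is_checker_w).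
  - unfold wb_pow; rewrite concat_repeat_S, <- app_assoc, <- app_assoc.
    exact (IHm s1 (w :: b :: s2)).
Qed.

Definition hole_left (m j r : nat) : config := b_pow j ++ [O] ++ wb_pow m ++ b_pow r.
Definition hole_right (m j r : nat) : config := b_pow j ++ wb_pow m ++ [O] ++ b_pow r.

Lemma hole_left_phase (m j r : nat) :
  moves_in (1 + m) (hole_left m (S j) r) (hole_right m j (S r)).
Proof.
  unfold hole_left, hole_right.
  apply (moves_in_trans 1 m _ (b_pow j ++ O :: (b :: wb_pow m) ++ b_pow r)).
  - apply moves_in_1; rewrite b_pow_S, <- app_assoc.
    exact (slide_right (b_pow j) (wb_pow m ++ b_pow r) b is_checker_b).
  - rewrite cons_b_wb_pow, <- app_assoc.
    exact (vacancy_jumps_right m (b_pow j) (b :: b_pow r)).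
Qed.

Lemma hole_right_phase (m j r : nat) :
  moves_in (1 + m) (hole_right m (S j) r) (hole_left m j (S r)).
Proof.
  unfold hole_left, hole_right.
  apply (moves_in_trans 1 m _ (b_pow j ++ bw_pow m ++ O :: b :: b_pow r)).
  - apply moves_in_1; rewrite b_pow_S, <- app_assoc.
    change ([b] ++ wb_pow m ++ [O] ++ b_pow r) with ((b :: wb_pow m) ++ O :: b_pow r).
    rewrite cons_b_wb_pow, <- !app_assoc, !(app_assoc (b_pow j)).
    exact (slide_right (b_pow j ++ bw_pow m) (b_pow r) b is_checker_b).
  - exact (vacancy_jumps_left m (b_pow j) (b :: b_pow r)).
Qed.

Lemma clear_left_block (m j : nat) : forall (r : nat) (c : config),
  c = hole_left m j r \/ c = hole_right m j r ->
  exists c' : config,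
    (c' = hole_right m 0 (r + j) \/ c' = hole_left m 0 (r + j)) /\
    moves_in (j * (m + 1)) c c'.
Proof.
  induction j as [|j IHj]; intros r c Hc.
  - exists c; rewrite Nat.add_0_r.
    split; [destruct Hc; auto | constructor].
  - replace (r + S j) with (S r + j) by lia.
    replace (S j * (m + 1)) with ((1 + m) + j * (m + 1)) by lia.
    destruct Hc as [-> | ->].
    + destruct (IHj (S r) _ (or_intror eq_refl)) as [c' [Hc' Hmoves]].
      exists c'; split; [exact Hc'|].
      exact (moves_in_trans _ _ _ _ _ (hole_left_phase m j r) Hmoves).
    + destruct (IHj (S r) _ (or_introl eq_refl)) as [c' [Hc' Hmoves]].
      exists c'; split; [exact Hc'|].
      exact (moves_in_trans _ _ _ _ _ (hole_right_phase m j r) Hmoves).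
Qed.

Theorem lemma4 (n m : nat) (hm : 1 <= m) (hmn : m < n) :
  forall c : config,
    c = b_pow (n - m) ++ [O] ++ wb_pow m \/ c = b_pow (n - m) ++ wb_pow m ++ [O] ->
    exists c' : config,
      (c' = wb_pow m ++ [O] ++ b_pow (n - m) \/ c' = [O] ++ wb_pow m ++ b_pow (n - m)) /\
      moves_in ((n - m) * (m + 1)) c c'.
Proof.
  intros c Hc.
  apply (clear_left_block m (n - m) 0 c).
  unfold hole_left, hole_right, b_pow; simpl.
  now rewrite !app_nil_r.
Qed.
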